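(* Let $\Gamma$ be a hyperbolic graph and $D\ge 2$ an integer. Then the $2D$-polarized lattice $\mathcal{F}_h(\Gamma)$ is hyperbolic if and only if an intrinsic polarization $h_\Gamma$ of $\Gamma$ exists and $2D\le h_\Gamma^2$.
   Context: Graphs are finite, without loops or multiple edges. For a graph $\Gamma$, $\mathbb{Z}\Gamma$ is the lattice freely generated by the vertices, with $v^2=-2$ and $u\cdot v=1$ or $0$ according as distinct vertices $u,v$ are adjacent or not. For a lattice $L$, $\ker L=\{x\in L: x\cdot y=0\ \forall y\in L\}$, and $L/\ker$ denotes $L/\ker L$ with the induced form. The lattice $\mathcal{F}_h(\Gamma):=(\mathbb{Z}\Gamma\oplus\mathbb{Z}h)/\ker$, where the form on $\mathbb{Z}\Gamma\oplus\mathbb{Z}h$ (a direct sum of groups, not an orthogonal sum) extends that of $\mathbb{Z}\Gamma$ by $h^2=2D$ and $v\cdot h=1$ for every vertex $v$. A lattice is hyperbolic if the positive inertia index of its real quadratic form is $1$; $\Gamma$ is hyperbolic if $\mathbb{Z}\Gamma$ is. An intrinsic polarization is a vector $h_\Gamma\in\mathbb{Z}\Gamma\otimes\mathbb{Q}$ with $v\cdot h_\Gamma=1$ for every vertex $v$; if it exists, it is unique modulo $\ker\mathbb{Z}\Gamma$, so $h_\Gamma^2\in\mathbb{Q}$ is well defined. *)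

From HB Require Import structures.
From mathcomp Require Import all_boot all_order all_algebra.
From mathcomp Require Import reals.
Set Implicit Arguments. Unset Strict Implicit. Unset Printing Implicit Defensive.
Import Order.TTheory GRing.Theory Num.Theory.
Local Open Scope ring_scope.

(* A lattice freely generated by a finite set I of generators, given by its
   Gram function g : I -> I -> K (g i j = i . j). *)
Definition qform (K : ringType) (I : finType) (g : I -> I -> K) (x : I -> K) : K :=
  \sum_(i : I) \sum_(j : I) x i * x j * g i j.

(* The real quadratic form of g is positive definite on the span of the r
   vectors vs_0, ..., vs_(r-1) (which are then automatically independent). *)
Definition pos_def_on (R : realType) (I : finType) (g : I -> I -> R) (r : nat)
    (vs : 'I_r -> I -> R) : Prop :=
  forall a : 'I_r -> R, (exists k, a k != 0) ->
    0 < qform g (fun i => \sum_(k < r) a k * vs k i).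

Definition pos_inertia_ge (R : realType) (I : finType) (g : I -> I -> R) (r : nat) : Prop :=
  exists vs : 'I_r -> I -> R, pos_def_on g vs.

Definition pos_inertia_eq (R : realType) (I : finType) (g : I -> I -> R) (k : nat) : Prop :=
  pos_inertia_ge g k /\ ~ pos_inertia_ge g k.+1.

Definition hyperbolic_gram (R : realType) (I : finType) (g : I -> I -> R) : Prop :=
  pos_inertia_eq g 1.

(* Gram function of Z Gamma for a simple graph given by e : rel T. *)
Definition gram_graph (K : ringType) (T : finType) (e : rel T) (u v : T) : K :=
  if u == v then - 2%:R else if e u v then 1 else 0.

(* Gram function of Z Gamma (+) Z h, generators option T (None = h):
   h^2 = 2D, v.h = 1 for every vertex v. *)
Definition gram_Fh (K : ringType) (T : finType) (e : rel T) (D : nat)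
    (x y : option T) : K :=
  match x, y with
  | Some u, Some v => gram_graph K e u v
  | None, None => (2 * D)%:R
  | _, _ => 1
  end.

(* h = sum_u c u * u in Z Gamma (x) Q is an intrinsic polarization:
   v . h = 1 for every vertex v. *)
Definition intrinsic_polarization (T : finType) (e : rel T) (c : T -> rat) : Prop :=
  forall v : T, \sum_(u : T) c u * gram_graph rat e v u = 1.

(* If an intrinsic polarization c exists, completing the square gives
   (x + s h)^2 = (x + s c)^2 + s^2 (2D - c^2) in F_h.  When 2D <= c^2 the map
   x + s h |-> x + s c does not decrease the form, so positive subspaces of
   F_h map to positive subspaces of Z Gamma of the same dimension; when
   2D > c^2 the vector h - c, orthogonal to Z Gamma, adds a second positive
   direction to a positive vector p of Z Gamma.  If no intrinsic polarization
   exists, the Fredholm alternative for the symmetric Gram matrix over Q gives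
   a kernel vector k of Z Gamma with k . h = sum k <> 0; then p and h + t k
   span a positive plane for a suitable t. *)

From mathcomp Require Import all_boot all_order all_algebra.
From mathcomp Require Import reals.
From mathcomp Require Import ring.
Set Implicit Arguments. Unset Strict Implicit. Unset Printing Implicit Defensive.
Import Order.TTheory GRing.Theory Num.Theory.
Local Open Scope ring_scope.

Section QuadraticForm.
Variables (R : comNzRingType) (I : finType) (g : I -> I -> R).

Definition bform (x y : I -> R) : R := \sum_i \sum_j x i * y j * g i j.

(* [gmulv g z i] is the product [i . z]; thus [intrinsic_polarization e c]
   unfolds to [forall v, gmulv (gram_graph rat e) c v = 1]. *)
Definition gmulv (z : I -> R) (i : I) : R := \sum_j z j * g i j.

Lemma eq_qform (x y : I -> R) : x =1 y -> qform g x = qform g y.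
Proof. by move=> xy; apply: eq_bigr => i _; apply: eq_bigr => j _; rewrite !xy. Qed.

Lemma qformZ (a : R) (x : I -> R) : qform g (fun i => a * x i) = a ^+ 2 * qform g x.
Proof.
rewrite /qform mulr_sumr; apply: eq_bigr => i _.
by rewrite mulr_sumr; apply: eq_bigr => j _; ring.
Qed.

Lemma gmulvZ (a : R) (z : I -> R) (i : I) : gmulv (fun j => a * z j) i = a * gmulv z i.
Proof. by rewrite /gmulv mulr_sumr; apply: eq_bigr => j _; rewrite mulrA. Qed.

Lemma bform_gmulv_const (x z : I -> R) (l : R) :
  (forall i, gmulv z i = l) -> bform x z = l * \sum_i x i.
Proof.
move=> zl; rewrite mulr_sumr; apply: eq_bigr => i _.
by rewrite mulrC -(zl i) mulr_sumr; apply: eq_bigr => j _; rewrite mulrA.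
Qed.

Hypothesis g_sym : forall i j, g i j = g j i.

Lemma qformD (x y : I -> R) :
  qform g (fun i => x i + y i) = qform g x + 2 * bform x y + qform g y.
Proof.
have yx : bform y x = bform x y.
  rewrite /bform exchange_big; apply: eq_bigr => i _; apply: eq_bigr => j _.
  by rewrite g_sym; ring.
transitivity (qform g x + bform x y + bform y x + qform g y); last by rewrite yx; ring.
rewrite /qform /bform -!big_split; apply: eq_bigr => i _.
by rewrite -!big_split; apply: eq_bigr => j _ /=; ring.
Qed.

Lemma qformD_ker (x k : I -> R) :
  (forall i, gmulv k i = 0) -> qform g (fun i => x i + k i) = qform g x.
Proof.
move=> k0; rewrite qformD.
have -> : qform g k = 0 by rewrite [LHS](bform_gmulv_const k k0) mul0r.
by rewrite (bform_gmulv_const x k0) mul0r mulr0 !addr0.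
Qed.

End QuadraticForm.

Lemma polarization_or_kernel (K : fieldType) (I : finType) (g : I -> I -> K) :
  (forall i j, g i j = g j i) ->
  (exists c, forall i, gmulv g c i = 1) \/
  (exists k, (forall i, gmulv g k i = 0) /\ \sum_i k i != 0).
Proof.
(* Either the all-ones row lies in the row space of [A], or some column of
   [cokermx A] is killed by [A] but not by the all-ones row. *)
move=> g_sym; pose A : 'M[K]_#|I| := \matrix_(i, j) g (enum_val i) (enum_val j).
have sum_enum (F : I -> K) : \sum_u F u = \sum_(i < #|I|) F (enum_val i).
  exact: (big_enum_val F).
have [/submxP [x bxA] | ] := boolP ((const_mx 1 : 'rV[K]_#|I|) <= A)%MS.
  left; exists (fun u => x 0 (enum_rank u)) => v.
  have /matrixP /(_ 0 (enum_rank v)) := bxA; rewrite !mxE => ->.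
  by rewrite /gmulv sum_enum; apply: eq_bigr => i _; rewrite mxE enum_valK enum_rankK g_sym.
rewrite submxE => /matrix0Pn [i0 [j0 bK]]; right.
exists (fun u => cokermx A (enum_rank u) j0); split.
  move=> v; have /matrixP /(_ (enum_rank v) j0) := mulmx_coker A.
  rewrite !mxE => <-; rewrite /gmulv sum_enum; apply: eq_bigr => i _.
  by rewrite [A _ _]mxE enum_valK enum_rankK mulrC.
suff -> : \sum_u cokermx A (enum_rank u) j0 = (const_mx 1 *m cokermx A) i0 j0 by [].
by rewrite mxE sum_enum; apply: eq_bigr => j _; rewrite [X in X * _]mxE mul1r enum_valK.
Qed.

Section GramGraphMorphism.
Variables (K L : comNzRingType) (f : {rmorphism K -> L}) (T : finType) (e : rel T).

Lemma rmorph_gram_graph (u v : T) : f (gram_graph K e u v) = gram_graph L e u v.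
Proof.
by rewrite /gram_graph; case: (u == v); case: (e u v);
  rewrite ?rmorphN ?rmorph_nat ?rmorph1 ?rmorph0.
Qed.

Lemma rmorph_qform_graph (x : T -> K) :
  f (qform (gram_graph K e) x) = qform (gram_graph L e) (fun u => f (x u)).
Proof.
rewrite rmorph_sum; apply: eq_bigr => i _; rewrite rmorph_sum; apply: eq_bigr => j _.
by rewrite !rmorphM rmorph_gram_graph.
Qed.

Lemma rmorph_gmulv_graph (x : T -> K) (v : T) :
  f (gmulv (gram_graph K e) x v) = gmulv (gram_graph L e) (fun u => f (x u)) v.
Proof. by rewrite rmorph_sum; apply: eq_bigr => u _; rewrite rmorphM rmorph_gram_graph. Qed.

End GramGraphMorphism.

Lemma binary_form_gt0 (R : realFieldType) (A B C x y : R) :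
  0 < A -> B ^+ 2 < A * C -> (x != 0) || (y != 0) ->
  0 < x ^+ 2 * A + 2 * x * y * B + y ^+ 2 * C.
Proof.
move=> A0 disc xy; have [y0|y0] := eqVneq y 0.
  rewrite y0 expr0n /= mulr0 !mul0r !addr0 mulr_gt0 // exprn_even_gt0 //.
  by rewrite y0 eqxx orbF in xy.
have sq : A * (x ^+ 2 * A + 2 * x * y * B + y ^+ 2 * C)
          = (x * A + y * B) ^+ 2 + y ^+ 2 * (A * C - B ^+ 2) by ring.
rewrite -(pmulr_rgt0 _ A0) sq ltr_wpDl ?sqr_ge0 // mulr_gt0 ?subr_gt0 //.
by rewrite exprn_even_gt0.
Qed.

Section Inertia.
Variables (R : realType) (I : finType) (g : I -> I -> R).

Lemma pos_inertia_ge1P : pos_inertia_ge g 1 <-> exists x, 0 < qform g x.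
Proof.
split=> [[vs vs_pos] | [x x_pos]].
  exists (vs ord0); have := vs_pos (fun=> 1) (ex_intro _ ord0 (oner_neq0 _)).
  by rewrite (eq_qform _ (y := vs ord0)) // => i; rewrite big_ord1 mul1r.
exists (fun=> x) => a [k ak].
rewrite (eq_qform _ (y := fun i => a ord0 * x i)); last by move=> i; rewrite big_ord1.
by rewrite qformZ pmulr_rgt0 // exprn_even_gt0 //; rewrite (ord1 k) in ak.
Qed.

Lemma pos_inertia_ge2 (u w : I -> R) (A B C : R) :
  (forall x y, qform g (fun i => x * u i + y * w i)
               = x ^+ 2 * A + 2 * x * y * B + y ^+ 2 * C) ->
  0 < A -> B ^+ 2 < A * C -> pos_inertia_ge g 2.
Proof.
move=> Q A0 disc; exists (tnth [tuple u; w]) => a [k ak].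
rewrite (_ : qform g _ = qform g (fun i => a ord0 * u i + a ord_max * w i)).
  rewrite Q binary_form_gt0 //.
  have k01 : k = ord0 \/ k = ord_max.
    by case: k {ak} => -[|[|//]] ?; [left|right]; apply: val_inj.
  by case: k01 ak => -> ->; rewrite ?orbT.
apply: eq_qform => i; rewrite big_ord_recl big_ord1 /=.
by congr (_ + a _ * _); apply: val_inj.
Qed.

Lemma pos_inertia_ge_mono (J : finType) (g' : J -> J -> R) (r : nat)
    (f : (I -> R) -> J -> R) :
  (forall x, qform g x <= qform g' (f x)) ->
  (forall (a : 'I_r -> R) (vs : 'I_r -> I -> R),
     f (fun i => \sum_k a k * vs k i) =1 (fun j => \sum_k a k * f (vs k) j)) ->
  pos_inertia_ge g r -> pos_inertia_ge g' r.
Proof.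
move=> le_f f_lin [vs vs_pos]; exists (fun k => f (vs k)) => a a0.
by rewrite -(eq_qform _ (f_lin a vs)); apply: lt_le_trans (vs_pos a a0) (le_f _).
Qed.

End Inertia.

Lemma sum_option (V : nmodType) (T : finType) (F : option T -> V) :
  \sum_(o : option T) F o = F None + \sum_(u : T) F (Some u).
Proof.
rewrite (bigD1 None) //=; congr (_ + _).
rewrite (reindex_omap Some (fun x => x)) /=; last by case.
by apply: eq_bigl => u; rewrite eqxx.
Qed.

Section GramFh.
Variables (R : comNzRingType) (T : finType) (e : rel T) (D : nat).

Local Notation G := (gram_graph R e).
Local Notation F := (gram_Fh R e D).

Lemma gram_graph_sym : symmetric e -> forall u v, G u v = G v u.
Proof. by move=> e_sym u v; rewrite /gram_graph eq_sym e_sym. Qed.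

Lemma qform_Fh (x : option T -> R) :
  qform F x = qform G (fun u => x (Some u))
              + 2 * x None * \sum_u x (Some u) + x None ^+ 2 * (2 * D)%:R.
Proof.
rewrite /qform sum_option sum_option /=.
under [X in _ + X]eq_bigr do rewrite sum_option /= mulr1 mulrC.
under eq_bigr do rewrite mulr1.
by rewrite big_split /= -mulr_sumr; ring.
Qed.

Hypothesis e_sym : symmetric e.

Lemma qform_Fh_polar (c : T -> R) (x : option T -> R) :
  (forall v, gmulv G c v = 1) ->
  qform F x = qform G (fun u => x (Some u) + x None * c u)
              + x None ^+ 2 * ((2 * D)%:R - qform G c).
Proof.
move=> c1; have gs := gram_graph_sym e_sym.
have cs : forall v, gmulv G (fun u => x None * c u) v = x None.
  by move=> v; rewrite gmulvZ c1 mulr1.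
rewrite qform_Fh qformD // qformZ (bform_gmulv_const _ cs).
have -> : qform G c = \sum_u c u by rewrite [LHS](bform_gmulv_const c c1) mul1r.
ring.
Qed.

End GramFh.

Section FhInertia.
Variables (R : realType) (T : finType) (e : rel T) (D : nat).
Hypothesis e_sym : symmetric e.

Local Notation G := (gram_graph R e).
Local Notation F := (gram_Fh R e D).

Lemma pos_inertia_ge_graph_Fh (r : nat) : pos_inertia_ge G r -> pos_inertia_ge F r.
Proof.
apply: (pos_inertia_ge_mono (f := fun x o => if o is Some u then x u else 0)).
  by move=> x; rewrite qform_Fh mulr0 expr0n /= !mul0r !addr0.
by move=> a vs [u|] //=; rewrite big1 // => k _; rewrite mulr0.
Qed.

Lemma pos_inertia_ge_Fh_graph (c : T -> R) (r : nat) :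
  (forall v, gmulv G c v = 1) -> (2 * D)%:R <= qform G c ->
  pos_inertia_ge F r -> pos_inertia_ge G r.
Proof.
move=> c1 c_ge.
apply: (pos_inertia_ge_mono (f := fun x u => x (Some u) + x None * c u)).
  move=> x; rewrite (qform_Fh_polar D e_sym _ c1) gerDl.
  by rewrite mulr_ge0_le0 ?sqr_ge0 ?subr_le0.
move=> a vs u /=; rewrite mulr_suml -big_split /=.
by apply: eq_bigr => k _; rewrite mulrDr mulrA.
Qed.

Lemma pos_inertia_ge2_Fh_polar (c : T -> R) :
  (forall v, gmulv G c v = 1) -> qform G c < (2 * D)%:R ->
  pos_inertia_ge G 1 -> pos_inertia_ge F 2.
Proof.
move=> c1 c_lt /pos_inertia_ge1P [p p_pos].
apply: (pos_inertia_ge2 (u := fun o => if o is Some v then p v else 0)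
                        (w := fun o => if o is Some v then - c v else 1)
                        (B := 0) (C := (2 * D)%:R - qform G c) _ p_pos);
  last by rewrite expr0n mulr_gt0 ?subr_gt0.
move=> x y; rewrite (qform_Fh_polar D e_sym _ c1) /= mulr0 add0r mulr1.
rewrite (eq_qform _ (y := fun v => x * p v)) ?qformZ; first by ring.
by move=> v; rewrite mulrN subrK.
Qed.

Lemma pos_inertia_ge2_Fh_kernel (k : T -> R) :
  (forall v, gmulv G k v = 0) -> \sum_u k u != 0 ->
  pos_inertia_ge G 1 -> pos_inertia_ge F 2.
Proof.
move=> k0 s0 /pos_inertia_ge1P [p p_pos].
set P := qform G p; set S := \sum_u p u; set s := \sum_u k u.
(* With this [t] the discriminant condition reads [S^2 < S^2 + 1 + 2 D P]. *)
pose t := (S ^+ 2 + 1) / (2 * s * P).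
have tsP : 2 * t * s * P = S ^+ 2 + 1.
  by rewrite /t; field; rewrite s0 lt0r_neq0.
apply: (pos_inertia_ge2 (u := fun o => if o is Some v then p v else 0)
                        (w := fun o => if o is Some v then t * k v else 1)
                        (B := S) (C := 2 * t * s + (2 * D)%:R) _ p_pos); last first.
  by rewrite mulrDr mulrC tsP -addrA ltrDl ltr_pwDl // mulr_ge0 // ltW.
move=> x y; rewrite qform_Fh /= mulr0 add0r mulr1.
have tk0 v : gmulv G (fun u => y * (t * k u)) v = 0 by rewrite !gmulvZ k0 !mulr0.
rewrite (qformD_ker (gram_graph_sym R e_sym) _ tk0) qformZ big_split /= -!mulr_sumr.
by rewrite -/P -/S -/s; ring.
Qed.

End FhInertia.

Theorem proposition2p8 (R : realType) (T : finType) (e : rel T)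
    (e_sym : symmetric e) (e_irr : irreflexive e) (D : nat) (hD : (2 <= D)%N)
    (hypG : hyperbolic_gram (gram_graph R e)) :
  hyperbolic_gram (gram_Fh R e D) <->
  exists c : T -> rat, intrinsic_polarization e c /\
    (2 * D)%:R <= qform (gram_graph rat e) c.
Proof.
case: hypG => G_ge1 G_not_ge2.
have ratr_gmulv (c : T -> rat) v :
  gmulv (gram_graph R e) (fun u => ratr (c u)) v = ratr (gmulv (gram_graph rat e) c v).
  by rewrite rmorph_gmulv_graph.
have ratr_le (c : T -> rat) :
  ((2 * D)%:R <= qform (gram_graph R e) (fun u => ratr (c u)))
  = ((2 * D)%:R <= qform (gram_graph rat e) c).
  by rewrite -rmorph_qform_graph -(rmorph_nat (@ratr R)) ler_rat.
split=> [[_ F_not_ge2] | [c [c_pol c_ge]]].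
  have [[c c_pol] | [k [k_ker k_sum]]] := polarization_or_kernel (gram_graph_sym rat e_sym).
    exists c; split=> //; rewrite leNgt; apply/negP => c_lt; apply: F_not_ge2.
    apply: (pos_inertia_ge2_Fh_polar e_sym (c := fun u => ratr (c u))) => //.
      by move=> v; rewrite ratr_gmulv c_pol rmorph1.
    by rewrite ltNge ratr_le -ltNge.
  exfalso; apply: F_not_ge2.
  apply: (pos_inertia_ge2_Fh_kernel D e_sym (k := fun u => ratr (k u))) => //.
    by move=> v; rewrite ratr_gmulv k_ker rmorph0.
  by rewrite -rmorph_sum fmorph_eq0.
split; first exact: pos_inertia_ge_graph_Fh.
apply: contra_not G_not_ge2; apply: (pos_inertia_ge_Fh_graph e_sym (c := fun u => ratr (c u))).
  by move=> v; rewrite ratr_gmulv (c_pol v : gmulv _ c v = 1) rmorph1.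
by rewrite ratr_le.
Qed.
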